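(* Let $N,p,q\in\mathbb{N}$ with $p+q\le N$, let $t=N-p-q$, let $\lambda$ be a partition of length $\le N$, and let $A$ be an $N\times t$ matrix (possibly empty). Let $u=(u_1,\ldots,u_p)$, $v=(v_1,\ldots,v_q)$ be indeterminates (or elements of a field with $u_i\ne v_k$ for all $i,k$). Let $D$ be the determinant of the $N\times N$ matrix whose first $t$ columns are those of $A$, whose column $t+i$ ($1\le i\le p$) is $\operatorname{H}^N_{t+i,\lambda}(u_i,\ldots,u_p,v_1,\ldots,v_q)$, and whose column $t+p+i$ ($1\le i\le q$) is $\operatorname{H}^N_{t+p+i,\lambda}(v_i,\ldots,v_q)$. Let $D'$ be the determinant of the matrix obtained by replacing, for $1\le i\le p$, column $t+i$ by $\operatorname{H}^N_{t+q+i,\lambda}(u_i,\ldots,u_p)$ (other columns unchanged), and let $D''$ be the determinant of the matrix obtained from that one by reversing the order of columns $t+1,\ldots,t+p$. Then \[ D=\frac{D'}{\prod_{i=1}^p\prod_{k=1}^q(u_i-v_k)}=\frac{D''}{(-1)^{p(p-1)/2}\prod_{i=1}^p\prod_{k=1}^q(u_i-v_k)}. \]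
   Context: $\hom_m$ is the complete homogeneous symmetric polynomial of degree $m$ ($\hom_0=1$, $\hom_m=0$ for $m<0$). Partitions are extended by zeros: $\lambda_j=0$ beyond the length. For $s\in\mathbb{N}_0$ and variables $t_1,\ldots,t_m$, $\operatorname{H}^N_{s,\lambda}(t_1,\ldots,t_m)$ denotes the column vector $\bigl[\hom_{s+\lambda_j-j}(t_1,\ldots,t_m)\bigr]_{j=1}^N$. *)

From mathcomp Require Import all_boot all_order all_algebra.
Set Implicit Arguments. Unset Strict Implicit. Unset Printing Implicit Defensive.
Import Order.TTheory GRing.Theory Num.Theory.
Local Open Scope ring_scope.

Section Defs.
Variable F : fieldType.

(* complete homogeneous symmetric polynomial h_m evaluated at x = (x_1,...,x_k):
   sum of all monomials x_1^e_1 ... x_k^e_k with e_1+...+e_k = m. *)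
Definition homn (m : nat) (x : seq F) : F :=
  \sum_(e : {ffun 'I_(size x) -> 'I_m.+1} | ((\sum_(i < size x) (e i : nat))%N == m))
     \prod_(i < size x) (nth 0 x i) ^+ (e i).

Definition hom (m : int) (x : seq F) : F :=
  match m with Posz n => homn n x | Negz _ => 0 end.

(* H^N_{s,lambda}(x): entry in row r (0-based, i.e. j = r+1) is
   h_{s + lambda_j - j}(x), lambda extended by zeros. *)
Definition Hcol (N : nat) (lam : seq nat) (s : nat) (x : seq F) (r : 'I_N) : F :=
  hom (s%:Z + (nth 0%N lam r)%:Z - (r.+1)%:Z) x.

(* columns 0-based: column c <-> paper's column c+1. t := N - p - q. *)
Definition Dmat (N p q : nat) (A : 'M[F]_(N, N - p - q)) (lam : seq nat)
    (u : p.-tuple F) (v : q.-tuple F) : 'M[F]_N :=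
  \matrix_(r < N, c < N)
    let t := (N - p - q)%N in
    if (c < t)%N then oapp (A r) 0 (insub (val c))
    else if (c < t + p)%N then Hcol lam c.+1 (drop (c - t) u ++ v) r
    else Hcol lam c.+1 (drop (c - t - p) v) r.

Definition Dpmat (N p q : nat) (A : 'M[F]_(N, N - p - q)) (lam : seq nat)
    (u : p.-tuple F) (v : q.-tuple F) : 'M[F]_N :=
  \matrix_(r < N, c < N)
    let t := (N - p - q)%N in
    if (c < t)%N then oapp (A r) 0 (insub (val c))
    else if (c < t + p)%N then Hcol lam (t + q + (c - t)).+1 (drop (c - t) u) r
    else Hcol lam c.+1 (drop (c - t - p) v) r.

Definition Dppmat (N p q : nat) (A : 'M[F]_(N, N - p - q)) (lam : seq nat)
    (u : p.-tuple F) (v : q.-tuple F) : 'M[F]_N :=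
  \matrix_(r < N, c < N)
    let t := (N - p - q)%N in
    if (c < t)%N then oapp (A r) 0 (insub (val c))
    else if (c < t + p)%N then
      let i0 := (p.-1 - (c - t))%N in
      Hcol lam (t + q + i0).+1 (drop i0 u) r
    else Hcol lam c.+1 (drop (c - t - p) v) r.

End Defs.

From Pilot Require Import Defs.
From mathcomp Require Import all_boot all_order all_algebra ring zify.
Set Implicit Arguments. Unset Strict Implicit. Unset Printing Implicit Defensive.
Import Order.TTheory GRing.Theory Num.Theory.
Local Open Scope ring_scope.

(* The identity (a - b) h_m(a, b, X) = h_{m+1}(a, X) - h_{m+1}(b, X) turns
   column t+i of D, up to the factor u_i - v_1, into a difference of two
   columns in which v_1 has been traded for a shift of the degree by one.
   Sweeping the u-columns from left to right, each new column is
   (u_i - v_1) times the old one plus its right neighbour, so the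
   determinant gets multiplied by prod_i (u_i - v_1); after repeating this
   for v_1, ..., v_q the u-columns become those of D'. Reversing the p
   columns costs the sign (-1)^C(p,2). *)

Section CompleteHomogeneous.
Variable F : fieldType.

Fixpoint hom_rec (n : nat) (x : seq F) : F :=
  match x with
  | [::] => (n == 0)%:R
  | a :: X => \sum_(k < n.+1) a ^+ k * hom_rec (n - k) X
  end.

Definition geom_poly (K : nat) (a : F) : {poly F} := \sum_(k < K.+1) a ^+ k *: 'X^k.

Lemma coef_geom_poly K a j : (geom_poly K a)`_j = if (j <= K)%N then a ^+ j else 0.
Proof.
rewrite /geom_poly coef_sum.
under eq_bigr => k _ do rewrite coefZ coefXn.
case: leqP => hj.
  rewrite (bigD1 (Ordinal (hj : j < K.+1)%N)) //= eqxx mulr1 big1 ?addr0 //.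
  move=> k /eqP hk; case: eqP => [e|]; last by rewrite mulr0.
  by exfalso; apply: hk; apply/val_inj.
rewrite big1 // => k _; case: eqP => [e|]; last by rewrite mulr0.
by move: (ltn_ord k); rewrite -e ltnS leqNgt hj.
Qed.

Lemma coef_prod_geom_poly x n K :
  (n <= K)%N -> (\prod_(a <- x) geom_poly K a)`_n = hom_rec n x.
Proof.
elim: x n => [|a X IH] n hn /=; first by rewrite big_nil coef1.
rewrite big_cons coefM; apply: eq_bigr => k _.
rewrite coef_geom_poly IH; last by rewrite (leq_trans (leq_subr _ _)).
by rewrite (leq_trans _ hn) // -ltnS.
Qed.

Lemma homn_rec n x : homn n x = hom_rec n x.
Proof.
rewrite -(coef_prod_geom_poly x (leqnn n)) (big_nth 0) big_mkord /geom_poly.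
rewrite bigA_distr_bigA /= coef_sum /homn big_mkcond /=.
apply: eq_bigr => e _.
have -> : \prod_(i < size x) ((nth 0 x i) ^+ e i *: 'X^(e i)) =
   (\prod_(i < size x) (nth 0 x i) ^+ e i)%:P * 'X^(\sum_(i < size x) (e i : nat)).
  rewrite -prodrXr rmorph_prod -big_split /=.
  by apply: eq_bigr => i _; rewrite mul_polyC.
by rewrite coefCM coefXn eq_sym; case: eqP => _; rewrite ?mulr1 ?mulr0.
Qed.

Lemma hom_rec_perm n x y : perm_eq x y -> hom_rec n x = hom_rec n y.
Proof. by move=> pxy; rewrite -!(coef_prod_geom_poly _ (leqnn n)) (perm_big _ pxy). Qed.

Lemma hom_rec0 x : hom_rec 0 x = 1.
Proof. by elim: x => [|a X IH] //=; rewrite big_ord1 expr0 mul1r subn0. Qed.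

Lemma hom_recS n a X : hom_rec n.+1 (a :: X) = hom_rec n.+1 X + a * hom_rec n (a :: X).
Proof.
rewrite /= big_ord_recl expr0 mul1r subn0; congr (_ + _).
rewrite mulr_sumr; apply: eq_bigr => k _.
by rewrite /bump /= subSS exprS mulrA.
Qed.

Lemma hom_rec_sub n a b X :
  (a - b) * hom_rec n (a :: b :: X) = hom_rec n.+1 (a :: X) - hom_rec n.+1 (b :: X).
Proof.
elim: n => [|n IH]; first by rewrite hom_rec0 mulr1 !hom_recS !hom_rec0 !mulr1; ring.
by rewrite hom_recS mulrDr mulrCA IH (hom_recS n.+1 a X) (hom_recS n.+1 b X); ring.
Qed.

Lemma hom_sub (m : int) (a b : F) (X : seq F) :
  (a - b) * Defs.hom m (a :: b :: X) = Defs.hom (m + 1) (a :: X) - Defs.hom (m + 1) (b :: X).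
Proof.
case: m => [n|[|k]] /=.
- by rewrite addn1 !homn_rec hom_rec_sub.
- by rewrite subnn !homn_rec !hom_rec0 mulr0 subrr.
- by rewrite mulr0 subrr.
Qed.

Lemma hom_perm (m : int) (x y : seq F) : perm_eq x y -> Defs.hom m x = Defs.hom m y.
Proof. by case: m => [n|k] //= pxy; rewrite !homn_rec (hom_rec_perm _ pxy). Qed.

Lemma Hcol_perm N lam s (x y : seq F) (r : 'I_N) :
  perm_eq x y -> Hcol lam s x r = Hcol lam s y r.
Proof. by move=> pxy; rewrite /Hcol (hom_perm _ pxy). Qed.

Lemma Hcol_sub_cat N lam s (a b : F) (Z W : seq F) (r : 'I_N) :
  (a - b) * Hcol lam s (a :: Z ++ b :: W) r =
  Hcol lam s.+1 (a :: Z ++ W) r - Hcol lam s.+1 (Z ++ b :: W) r.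
Proof.
have pb : perm_eq (Z ++ b :: W) (b :: Z ++ W) by rewrite -cat1s perm_catCA.
rewrite (Hcol_perm _ _ _ pb) (@Hcol_perm _ _ _ _ (a :: b :: Z ++ W)) ?perm_cons //.
rewrite /Hcol hom_sub.
by congr (Defs.hom _ _ - Defs.hom _ _); rewrite -[s.+1]addn1 PoszD; ring.
Qed.

End CompleteHomogeneous.

Section ColumnOperations.
Variables (R : comPzRingType) (N : nat).

Lemma det_scale_add_col n (M M' : 'M[R]_n) (j k : 'I_n) (a : R) : k != j ->
  (forall r c, c != j -> M' r c = M r c) ->
  (forall r, M' r j = a * M r j + M r k) -> \det M' = a * \det M.
Proof.
move=> hkj hc hj; rewrite -det_tr -[\det M]det_tr.
pose C := \matrix_(i, l) (if i == j then M l k else M l i).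
rewrite (@determinant_multilinear _ _ _ M^T C j a 1).
- rewrite (@determinant_alternate _ _ C j k) ?mulr0 ?addr0 1?eq_sym //.
  by move=> l; rewrite !mxE eqxx (negbTE hkj).
- by apply/rowP => l; rewrite !mxE eqxx hj; ring.
- by apply/matrixP => i l; rewrite !mxE hc // eq_sym neq_lift.
- apply/matrixP => i l; have hl : lift j i != j by rewrite eq_sym neq_lift.
  by rewrite !mxE (negbTE hl) hc.
Qed.

Definition colsmx (h : nat -> 'I_N -> R) : 'M[R]_N := \matrix_(r, c) h c r.

Lemma eq_colsmx (h1 h2 : nat -> 'I_N -> R) :
  (forall c : 'I_N, h1 c =1 h2 c) -> colsmx h1 = colsmx h2.
Proof. by move=> e; apply/matrixP => r c; rewrite !mxE e. Qed.

(* Column t+j may use its right neighbour nb j because the sweep runs left to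
   right, so that neighbour is still unchanged when column t+j is modified. *)
Lemma det_sweep (h h' : nat -> 'I_N -> R) (a : nat -> R) (nb : nat -> nat) (t p : nat) :
  (t + p <= N)%N ->
  (forall c, ~~ (t <= c < t + p)%N -> h' c = h c) ->
  (forall j, (j < p)%N -> (t + j < nb j < N)%N) ->
  (forall j, (j < p)%N -> h' (t + j)%N =1 (fun r => a j * h (t + j)%N r + h (nb j) r)) ->
  \det (colsmx h') = \prod_(j < p) a j * \det (colsmx h).
Proof.
move=> htp hout hnb hcol.
pose mix j c := if (t <= c < t + j)%N then h' c else h c.
have sweep j : (j <= p)%N -> \det (colsmx (mix j)) = \prod_(i < j) a i * \det (colsmx h).
  elim: j => [|j IH] hj.
    rewrite big_ord0 mul1r; congr (\det _).
    by apply: eq_colsmx => c r; rewrite /mix ifF //; lia.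
  rewrite big_ord_recr /= [_ * a j]mulrC -mulrA -IH 1?ltnW //.
  have htj : (t + j < N)%N by lia.
  have /andP [hnbl hnbr] := hnb j hj.
  apply: (@det_scale_add_col _ _ _ (Ordinal htj) (Ordinal hnbr)).
  - by rewrite -val_eqE /=; lia.
  - move=> r c; rewrite -val_eqE /= => hc; rewrite !mxE /mix.
    by have -> : (t <= c < t + j.+1)%N = (t <= c < t + j)%N by lia.
  - move=> r; rewrite !mxE /mix /= ifT; last by lia.
    by rewrite ifF ?(@ifF _ (t <= nb j < _)%N) ?hcol //; lia.
rewrite -sweep //; congr (\det _); apply: eq_colsmx => c r; rewrite /mix.
by case: ifP => // hc; rewrite hout ?hc.
Qed.

Definition swap_idx (i j c : nat) : nat := if c == i then j else if c == j then i else c.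

Lemma det_swap_cols (h : nat -> 'I_N -> R) (i j : nat) :
  (i < N)%N -> (j < N)%N -> i != j ->
  \det (colsmx (fun c => h (swap_idx i j c))) = - \det (colsmx h).
Proof.
move=> hi hj hij.
have -> : colsmx (fun c => h (swap_idx i j c)) = xcol (Ordinal hi) (Ordinal hj) (colsmx h).
  apply/matrixP => r c; rewrite !mxE /swap_idx.
  case: perm.tpermP => [->|->|n1 n2] /=; first by rewrite eqxx.
    by rewrite eq_sym (negbTE hij) eqxx.
  case: eqP => e1; first by case: n1; apply/val_inj.
  by case: eqP => e2 //; case: n2; apply/val_inj.
rewrite xcolE det_mulmx det_perm perm.odd_tperm -val_eqE /= hij expr1; ring.
Qed.

Definition rev_idx (t p c : nat) : nat :=
  if (t <= c < t + p)%N then (t + p.-1 - (c - t))%N else c.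

Lemma det_rev_cols (p t : nat) (h : nat -> 'I_N -> R) : (t + p <= N)%N ->
  \det (colsmx (fun c => h (rev_idx t p c))) = (-1) ^+ 'C(p, 2) * \det (colsmx h).
Proof.
elim/ltn_ind: p t h => -[|[|p]] IH t h hN.
- rewrite expr0 mul1r; congr (\det _).
  by apply: eq_colsmx => c r; rewrite /rev_idx ifF //; lia.
- rewrite expr0 mul1r; congr (\det _); apply: eq_colsmx => c r; rewrite /rev_idx.
  by case: ifP => // /andP hc; congr h; lia.
have -> : colsmx (fun c => h (rev_idx t p.+2 c)) =
    colsmx (fun c => h (swap_idx t (t + p.+1) (rev_idx t.+1 p c))).
  apply: eq_colsmx => c r; congr (h _ r); rewrite /rev_idx /swap_idx.
  by repeat case: ifP; intros; lia.
rewrite (IH p _ t.+1 (fun c => h (swap_idx t (t + p.+1) c))) ?det_swap_cols //; try lia.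
rewrite !binS bin1 bin0 addn1 -addnA addnS addnn exprD exprS -mul2n exprM sqrrN !expr1n.
by rewrite mulr1 mulrN1 mulNr mulrN.
Qed.

End ColumnOperations.

Section Elimination.
Variables (F : fieldType) (N : nat) (lam : seq nat) (f : nat -> 'I_N -> F).
Variables (t p q : nat) (u v : seq F).
Hypotheses (hu : size u = p) (hv : size v = q) (hN : (t + p + q = N)%N).

(* Stage r of the elimination: v_1, ..., v_r are gone from the u-columns,
   whose degrees have grown by r; the v-columns never change. *)
Definition elim_cols (r c : nat) : 'I_N -> F :=
  if (c < t)%N then f c
  else if (c < t + p)%N then Hcol lam (c + r).+1 (drop (c - t) u ++ drop r v)
  else Hcol lam c.+1 (drop (c - t - p) v).

Lemma det_elim_cols_step r : (r < q)%N ->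
  \det (colsmx (elim_cols r.+1)) =
  \prod_(i < p) (nth 0 u i - nth 0 v r) * \det (colsmx (elim_cols r)).
Proof.
move=> hr.
pose nb j := if (j.+1 < p)%N then (t + j.+1)%N else (t + p + r)%N.
apply: (@det_sweep _ _ _ _ (fun i => nth 0 u i - nth 0 v r) nb t p); first by lia.
- move=> c hc; rewrite /elim_cols; case: ifP => //; case: ifP => //; lia.
- by move=> j hj; rewrite /nb; case: ifP; lia.
move=> j hj x.
have hnb : elim_cols r (nb j) x = Hcol lam (t + j + r).+2 (drop j.+1 u ++ drop r v) x.
  rewrite /elim_cols /nb; case: (ltnP j.+1 p) => hjp.
    by rewrite ifF ?ifT ?addKn ?addnS ?addSn //; lia.
  rewrite !ifF; try lia.
  rewrite (drop_oversize (_ : size u <= j.+1)%N) ?hu //.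
  have -> : (t + p + r - t - p = r)%N by lia.
  by have -> : (t + j + r).+2 = (t + p + r).+1 by lia.
have [htj htjp] : (t + j < t)%N = false /\ (t + j < t + p)%N by split; lia.
rewrite hnb /elim_cols htj htjp addKn (drop_nth 0) ?hu //.
rewrite (drop_nth 0 (_ : r < size v)%N) ?hv //.
by rewrite Hcol_sub_cat subrK addnS -cat_cons -(drop_nth 0) ?hu.
Qed.

Lemma det_elim_cols r : (r <= q)%N ->
  \det (colsmx (elim_cols r)) =
  \prod_(k < r) \prod_(i < p) (nth 0 u i - nth 0 v k) * \det (colsmx (elim_cols 0)).
Proof.
elim: r => [|r IH] hr; first by rewrite big_ord0 mul1r.
by rewrite det_elim_cols_step // IH 1?ltnW // big_ord_recr /= mulrA [X in X * _]mulrC.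
Qed.

End Elimination.

Section PaperMatrices.
Variables (F : fieldType) (N p q : nat) (A : 'M[F]_(N, N - p - q)) (lam : seq nat).
Variables (u : p.-tuple F) (v : q.-tuple F).

Let t := (N - p - q)%N.
Let fA (c : nat) (r : 'I_N) : F := oapp (A r) 0 (insub c).

Lemma Dmat_elim_cols : Dmat A lam u v = colsmx (elim_cols lam fA t p u v 0).
Proof.
by apply/matrixP => r c; rewrite !mxE /elim_cols addn0 drop0; case: ifP => // _; case: ifP.
Qed.

Lemma Dpmat_elim_cols : Dpmat A lam u v = colsmx (elim_cols lam fA t p u v q).
Proof.
apply/matrixP => r c; rewrite !mxE /elim_cols -/t.
case: ifP => // h1; case: ifP => // h2.
rewrite (drop_oversize (_ : size v <= q)%N) ?size_tuple // cats0.
by have -> : (t + q + (c - t) = c + q)%N by lia.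
Qed.

Lemma Dppmat_elim_cols :
  Dppmat A lam u v = colsmx (fun c => elim_cols lam fA t p u v q (rev_idx t p c)).
Proof.
apply/matrixP => r c; rewrite !mxE /elim_cols /rev_idx -/t.
case: (ltnP c t) => h1 /=; first by rewrite h1.
case: (ltnP c (t + p)) => h2 /=; last by rewrite ltnNge h1 ltnNge h2.
have [hl hr] : (t + p.-1 - (c - t) < t)%N = false /\ (t + p.-1 - (c - t) < t + p)%N.
  by split; lia.
rewrite hl hr (drop_oversize (_ : size v <= q)%N) ?size_tuple // cats0.
have -> : (t + p.-1 - (c - t) - t = p.-1 - (c - t))%N by lia.
by have -> : (t + p.-1 - (c - t) + q = t + q + (p.-1 - (c - t)))%N by lia.
Qed.

End PaperMatrices.

Theorem lemma7p1 (F : fieldType) (N p q : nat) (hpq : (p + q <= N)%N)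
  (lam : seq nat) (hsort : sorted geq lam) (hpos : all (fun x => 0 < x)%N lam)
  (hsz : (size lam <= N)%N)
  (A : 'M[F]_(N, N - p - q)) (u : p.-tuple F) (v : q.-tuple F)
  (huv : forall (i : 'I_p) (k : 'I_q), tnth u i != tnth v k) :
  \det (Dmat A lam u v) =
    \det (Dpmat A lam u v) / \prod_(i < p) \prod_(k < q) (tnth u i - tnth v k)
  /\
  \det (Dmat A lam u v) =
    \det (Dppmat A lam u v) /
      ((-1) ^+ (p * (p - 1) %/ 2) * \prod_(i < p) \prod_(k < q) (tnth u i - tnth v k)).
Proof.
set P := \prod_(i < p) \prod_(k < q) _.
have hP : P != 0.
  by apply/prodf_neq0 => i _; apply/prodf_neq0 => k _; rewrite subr_eq0 huv.
have hDp : \det (Dpmat A lam u v) = P * \det (Dmat A lam u v).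
  have hN : (N - p - q + p + q = N)%N by lia.
  rewrite Dpmat_elim_cols Dmat_elim_cols.
  rewrite (det_elim_cols _ _ (size_tuple u) (size_tuple v) hN) //.
  rewrite exchange_big /P; congr (_ * _).
  by apply: eq_bigr => k _; apply: eq_bigr => i _; rewrite !(tnth_nth 0).
have hDpp : \det (Dppmat A lam u v) = (-1) ^+ (p * (p - 1) %/ 2) * \det (Dpmat A lam u v).
  by rewrite Dppmat_elim_cols det_rev_cols ?Dpmat_elim_cols ?bin2 ?subn1 ?divn2 //; lia.
by split; [rewrite hDp | rewrite hDpp hDp]; field; rewrite ?hP ?signr_eq0.
Qed.
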